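(* Let $\mathbb{X}$ be a smooth reflexive real Banach space with the Kadets–Klee property and $\mathbb{Y}$ a smooth real Banach space. Let $T\in\mathbb{K}(\mathbb{X},\mathbb{Y})$ with $\|T\|=1$ be a smooth operator. Then $M_T=\{\pm x\}$ for some $x\in S_{\mathbb{X}}$. Moreover, let $H$ be the unique hyperspace of $\mathbb{X}$ such that $x\perp_B H$; if $(x,Tx)$ is a CPP with CPP constant $(r,\mu)$ and $0<\|T\|_H<\mu$, then $T$ is not an extreme contraction.
   Context: All Banach spaces are real and of dimension greater than $1$. $\mathbb{K}(\mathbb{X},\mathbb{Y})$ is the space of compact linear operators with operator norm. $T$ is a smooth operator if it is a smooth point of the unit sphere of $\mathbb{K}(\mathbb{X},\mathbb{Y})$, i.e., there is a unique norm one functional $f$ on $\mathbb{K}(\mathbb{X},\mathbb{Y})$ with $f(T)=\|T\|$. $\mathbb{X}$ has the Kadets–Klee property if $x_n\rightharpoonup x$ weakly and $\|x_n\|\to\|x\|$ imply $x_n\to x$ in norm. $M_T=\{x\in S_{\mathbb{X}}:\|Tx\|=\|T\|\}$. $x\perp_B y$ means $\|x+\lambda y\|\ge\|x\|$ for all real $\lambda$; $x\perp_B H$ means $x\perp_B h$ for all $h\in H$; $x^\perp=\{y:x\perp_By\}$. A hyperspace is a closed subspace of codimension one. $\|T\|_H=\sup\{\|Th\|:h\in H,\|h\|=1\}$. An extreme contraction is a norm one operator that is an extreme point of the closed unit ball of $\mathbb{L}(\mathbb{X},\mathbb{Y})$. $B(x,r)=\{u:\|u-x\|<r\}$. For $x\in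 S_{\mathbb{X}}$, $v\in S_{\mathbb{Y}}$, $(x,v)$ is a CPP with CPP constant $(r,\mu)$ ($r,\mu>0$) if for all $z\in x^\perp\cap S_{\mathbb{X}}$, all $w\in v^\perp\cap S_{\mathbb{Y}}$ and all $a,b\in\mathbb{R}$, $ax+bz\in B(x,r)\cap S_{\mathbb{X}}$ implies $\|av+b\mu w\|\le1$. *)

From HB Require Import structures.
From mathcomp Require Import all_boot all_order all_algebra.
From mathcomp Require Import all_classical all_reals all_analysis.
Set Implicit Arguments. Unset Strict Implicit. Unset Printing Implicit Defensive.
Import Order.TTheory GRing.Theory Num.Theory.
Import numFieldNormedType.Exports.
Local Open Scope classical_set_scope.
Local Open Scope ring_scope.

Section Defs.
Variable R : realType.

Section OneSpace.
Variable X : normedModType R.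

Definition dim_gt1 : Prop :=
  exists u v : X, forall a b : R, a *: u + b *: v = 0 -> a = 0 /\ b = 0.

Definition lin_fun (f : X -> R) : Prop :=
  forall (a : R) (x y : X), f (a *: x + y) = a * f x + f y.

Definition in_dual (f : X -> R) : Prop :=
  lin_fun f /\ exists C : R, forall x, `|f x| <= C * `|x|.

Definition fnorm (f : X -> R) : R :=
  sup [set `|f x| | x in [set x : X | `|x| <= 1]].

Definition supp_fun (x : X) (f : X -> R) : Prop :=
  in_dual f /\ fnorm f = 1 /\ f x = `|x|.

Definition smooth_space : Prop :=
  forall x : X, `|x| = 1 ->
    (exists f, supp_fun x f) /\ (forall f g, supp_fun x f -> supp_fun x g -> f = g).

Definition in_bidual (phi : (X -> R) -> R) : Prop :=
  (forall (a : R) f g, in_dual f -> in_dual g ->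
     phi (fun x => a * f x + g x) = a * phi f + phi g) /\
  exists C : R, forall f, in_dual f -> `|phi f| <= C * fnorm f.

Definition reflexive_space : Prop :=
  forall phi, in_bidual phi -> exists x : X, forall f, in_dual f -> phi f = f x.

Definition weak_cvg (u : nat -> X) (x : X) : Prop :=
  forall f, in_dual f -> (fun n => f (u n)) @ \oo --> f x.

Definition kadets_klee : Prop :=
  forall (u : nat -> X) (x : X),
    weak_cvg u x -> (fun n => `|u n|) @ \oo --> `|x| -> u @ \oo --> x.

Definition bj_orth (x y : X) : Prop := forall l : R, `|x| <= `|x + l *: y|.

Definition hyperspace (H : set X) : Prop :=
  closed H /\ H 0 /\ (forall (a : R) u v, H u -> H v -> H (a *: u + v)) /\
  exists z : X, ~ H z /\ forall v : X, exists h a, H h /\ v = h + a *: z.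

End OneSpace.

Section Operators.
Variables X Y : normedModType R.

Definition lin_op (T : X -> Y) : Prop :=
  forall (a : R) (x y : X), T (a *: x + y) = a *: T x + T y.

Definition bounded_op (T : X -> Y) : Prop :=
  lin_op T /\ exists C : R, forall x, `|T x| <= C * `|x|.

Definition compact_op (T : X -> Y) : Prop :=
  lin_op T /\ compact (closure [set T x | x in [set x : X | `|x| <= 1]]).

Definition opnorm (T : X -> Y) : R :=
  sup [set `|T x| | x in [set x : X | `|x| <= 1]].

Definition opnorm_on (T : X -> Y) (H : set X) : R :=
  sup [set `|T h| | h in [set h : X | H h /\ `|h| = 1]].

Definition norm_att (T : X -> Y) : set X :=
  [set x : X | `|x| = 1 /\ `|T x| = opnorm T].

Definition in_dualK (Phi : (X -> Y) -> R) : Prop :=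
  (forall (a : R) S1 S2, compact_op S1 -> compact_op S2 ->
     Phi (fun x => a *: S1 x + S2 x) = a * Phi S1 + Phi S2) /\
  exists C : R, forall S, compact_op S -> `|Phi S| <= C * opnorm S.

Definition fnormK (Phi : (X -> Y) -> R) : R :=
  sup [set `|Phi S| | S in [set S : X -> Y | compact_op S /\ opnorm S <= 1]].

Definition supp_funK (T : X -> Y) (Phi : (X -> Y) -> R) : Prop :=
  in_dualK Phi /\ fnormK Phi = 1 /\ Phi T = opnorm T.

(* smooth point of (the unit sphere of) K(X,Y); functionals on K(X,Y) are
   identified when they agree on K(X,Y) *)
Definition smooth_op (T : X -> Y) : Prop :=
  (exists Phi, supp_funK T Phi) /\
  (forall Phi Psi, supp_funK T Phi -> supp_funK T Psi ->
     forall S, compact_op S -> Phi S = Psi S).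

Definition extreme_contraction (T : X -> Y) : Prop :=
  bounded_op T /\ opnorm T = 1 /\
  forall (S1 S2 : X -> Y) (t : R),
    bounded_op S1 -> opnorm S1 <= 1 -> bounded_op S2 -> opnorm S2 <= 1 ->
    0 < t < 1 -> T = (fun x => t *: S1 x + (1 - t) *: S2 x) -> S1 = S2.

Definition CPP (x : X) (v : Y) (r mu : R) : Prop :=
  `|x| = 1 /\ `|v| = 1 /\ 0 < r /\ 0 < mu /\
  forall (z : X) (w : Y) (a b : R),
    bj_orth x z -> `|z| = 1 -> bj_orth v w -> `|w| = 1 ->
    `|a *: x + b *: z - x| < r -> `|a *: x + b *: z| = 1 ->
    `|a *: v + (b * mu) *: w| <= 1.

End Operators.
End Defs.

From mathcomp Require Import all_boot all_order all_algebra.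
From mathcomp Require Import all_classical all_reals all_analysis.
From mathcomp Require Import ring lra.
Set Implicit Arguments. Unset Strict Implicit. Unset Printing Implicit Defensive.
Import Order.TTheory GRing.Theory Num.Theory.
Import numFieldNormedType.Exports.
Local Open Scope classical_set_scope.
Local Open Scope ring_scope.

(* Compactness, reflexivity and smoothness give a unit vector x with ||T x|| = 1.
   If x' is another one and g, g' support T x, T x', then S |-> g (S x) and
   S |-> g' (S x') both support T in K(X,Y); as T is smooth they agree, and on the
   rank-one operators f(.) T x this yields x' = +-x. Weak cluster points of bounded
   sequences are taken as limits along a free ultrafilter on nat.

   For the second part let g be the functional with kernel H and g x = 1, and
   P v = T (v - g v x); then P <> 0 because ||T||_H > 0, and T is the midpoint of
   T + dP and T - dP. For d <= 1, T - dP = (1 - d) T + d g(.) T x is a contraction.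
   For T + dP: on unit vectors away from +-x, ||T v|| <= 1 - eta, because by
   Kadets-Klee and compactness every maximizing sequence of T has a subsequence
   converging to +-x; near +-x, T v + d P v = g v T x + (1 + d) T h with h in H and
   T x _|_B T h (smoothness of X identifies g with the support functional of T x
   composed with T), and the CPP bounds it as soon as (1 + d) ||T||_H <= mu. *)

Section SupImage.
Variable R : realType.

Lemma le_sup_image {T} (A : set T) (N : T -> R) (M : R) :
  (forall t, A t -> N t <= M) -> forall t, A t -> N t <= sup [set N t | t in A].
Proof.
by move=> AM t At; apply: ub_le_sup; [exists M => _ [s As <-]; exact: AM | exists t].
Qed.

Lemma sup_image_le {T} (A : set T) (N : T -> R) (M : R) :
  A !=set0 -> (forall t, A t -> N t <= M) -> sup [set N t | t in A] <= M.
Proof.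
by move=> [t At] AM; apply: ge_sup; [exists (N t), t | move=> _ [s As <-]; exact: AM].
Qed.

End SupImage.

Section LinearOperators.
Variables (R : realType) (X Y : normedModType R).
Implicit Types (T A B : X -> Y) (x y : X).

Lemma lin_op0 T : lin_op T -> T 0 = 0.
Proof.
by move=> hT; apply: (addrI (T 0)); have := hT 1 0 0; rewrite !scale1r !addr0 => <-.
Qed.

Lemma lin_opZ T : lin_op T -> forall a x, T (a *: x) = a *: T x.
Proof. by move=> hT a x; have := hT a x 0; rewrite !addr0 lin_op0 // addr0. Qed.

Lemma lin_opD T : lin_op T -> forall x y, T (x + y) = T x + T y.
Proof. by move=> hT x y; have := hT 1 x y; rewrite !scale1r. Qed.

Lemma lin_opN T : lin_op T -> forall x, T (- x) = - T x.
Proof. by move=> hT x; rewrite -scaleN1r lin_opZ // scaleN1r. Qed.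

Lemma lin_opB T : lin_op T -> forall x y, T (x - y) = T x - T y.
Proof. by move=> hT x y; rewrite lin_opD // lin_opN. Qed.

Lemma lin_op_add A B : lin_op A -> lin_op B -> lin_op (fun v => A v + B v).
Proof. by move=> hA hB a u w; rewrite hA hB scalerDr addrACA. Qed.

Lemma lin_op_sub A B : lin_op A -> lin_op B -> lin_op (fun v => A v - B v).
Proof. by move=> hA hB a u w; rewrite hA hB scalerBr opprD addrACA. Qed.

Lemma lin_op_scale (c : R) A : lin_op A -> lin_op (fun v => c *: A v).
Proof. by move=> hA a u w; rewrite hA scalerDr !scalerA mulrC. Qed.

Lemma lin_op_rank_one (g : X -> R) (y0 : Y) : lin_fun g -> lin_op (fun v => g v *: y0).
Proof. by move=> hg a u w; rewrite hg scalerDl scalerA. Qed.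

Definition ball_bounded T := exists M, forall x, `|x| <= 1 -> `|T x| <= M.

Lemma bounded_op_ball_bounded T : bounded_op T -> ball_bounded T.
Proof.
case=> _ [C hC]; exists `|C| => x x1; apply: le_trans (hC x) _.
by apply: le_trans (ler_wpM2r (normr_ge0 x) (ler_norm C)) _; exact: ler_piMr.
Qed.

Lemma compact_op_ball_bounded T : compact_op T -> ball_bounded T.
Proof.
case=> _ /compact_bounded /ex_strict_bound_gt0 [M _ hM]; exists M => x x1.
by apply/ltW/hM/subset_closure; exists x.
Qed.

Lemma ler_opnorm T x : ball_bounded T -> `|x| <= 1 -> `|T x| <= opnorm T.
Proof. by case=> M hM; apply: (@le_sup_image _ _ _ (fun x => `|T x|) M). Qed.

Lemma opnorm_le T (M : R) : (forall x, `|x| <= 1 -> `|T x| <= M) -> opnorm T <= M.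
Proof. by apply: (@sup_image_le _ _ _ (fun x => `|T x|)); exists 0; rewrite /= normr0. Qed.

Lemma opnorm_ge0 T : ball_bounded T -> 0 <= opnorm T.
Proof. by move=> hT; apply: le_trans (ler_opnorm (x := 0) hT _) => //; rewrite normr0. Qed.

Lemma lin_op_norm_le T (c : R) :
  lin_op T -> (forall u, `|u| = 1 -> `|T u| <= c) -> forall x, `|T x| <= c * `|x|.
Proof.
move=> hT hc x; have [->|x0] := eqVneq x 0; first by rewrite lin_op0 // !normr0 mulr0.
have nx0 : `|x| != 0 by rewrite normr_eq0.
rewrite -{1}(scalerKV nx0 x) lin_opZ // normrZ normr_id mulrC.
by apply: ler_wpM2r => //; apply: hc; rewrite normfZV.
Qed.

Lemma opnormP T : lin_op T -> ball_bounded T -> forall x, `|T x| <= opnorm T * `|x|.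
Proof. by move=> hl hb; apply: lin_op_norm_le => // u u1; apply: ler_opnorm; rewrite ?u1. Qed.

Lemma compact_op_bounded T : compact_op T -> bounded_op T.
Proof.
move=> hT; split; first exact: hT.1.
by exists (opnorm T); apply: opnormP hT.1 _; exact: compact_op_ball_bounded.
Qed.

Lemma opnorm1_le T : compact_op T -> opnorm T = 1 -> forall x, `|T x| <= `|x|.
Proof.
move=> hT hT1 x; rewrite -[leRHS]mul1r -hT1.
by apply: opnormP hT.1 _ x; exact: compact_op_ball_bounded.
Qed.
End LinearOperators.

Section Duality.
Variables (R : realType) (X : normedModType R).
Implicit Types (f : X -> R) (x y w : X).

Lemma in_dual_ball_bounded f : in_dual f -> ball_bounded f.
Proof. exact: bounded_op_ball_bounded. Qed.

Lemma fnormP f : in_dual f -> forall x, `|f x| <= fnorm f * `|x|.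
Proof. by move=> hf; apply: opnormP; [exact: hf.1 | exact: in_dual_ball_bounded]. Qed.

Lemma fnorm_ge0 f : in_dual f -> 0 <= fnorm f.
Proof. by move=> hf; apply: opnorm_ge0; exact: in_dual_ball_bounded. Qed.

Lemma in_dual_continuous f : in_dual f -> continuous f.
Proof.
move=> hf x; apply/cvgrPdist_lt => e e0.
have k0 : 0 < fnorm f + 1 by rewrite ltr_wpDl ?fnorm_ge0.
near=> v; rewrite -(lin_opB hf.1); apply: le_lt_trans (fnormP hf _) _.
apply: le_lt_trans (_ : _ <= (fnorm f + 1) * `|x - v|) _.
  by apply: ler_wpM2r => //; rewrite lerDl.
rewrite -ltr_pdivlMl // mulrC; near: v.
by apply: cvgr_dist_lt; [exact: cvg_id | rewrite divr_gt0].
Unshelve. all: by end_near. Qed.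

Lemma supp_fun_le x f : supp_fun x f -> forall v, `|f v| <= `|v|.
Proof. by case=> hf [f1 _] v; rewrite -[leRHS]mul1r -f1; exact: fnormP. Qed.

Lemma supp_funP x f :
  `|x| = 1 -> lin_fun f -> (forall v, `|f v| <= `|v|) -> f x = 1 -> supp_fun x f.
Proof.
move=> x1 hf fb fx; have hfd : in_dual f by split=> //; exists 1 => v; rewrite mul1r.
split=> //; split; last by rewrite fx x1.
apply/le_anti/andP; split; first by apply: opnorm_le => v v1; exact: le_trans (fb v) v1.
rewrite -[X in X <= _]normr1 -fx.
by apply: ler_opnorm; [exact: in_dual_ball_bounded | rewrite x1].
Qed.

Lemma bj_orthZ y w (c : R) : bj_orth y w -> bj_orth y (c *: w).
Proof. by move=> h l; rewrite scalerA. Qed.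

Lemma bj_orth_of_norming f y w :
  lin_fun f -> (forall v, `|f v| <= `|v|) -> f y = `|y| -> f w = 0 -> bj_orth y w.
Proof.
move=> hf fb fy fw l; have e : f (l *: w + y) = f y by rewrite hf fw mulr0 add0r.
by rewrite addrC -fy -e; exact: le_trans (ler_norm _) (fb _).
Qed.

Section Smooth.
Hypothesis hX : smooth_space X.

Lemma smooth_norming_fun w :
  w != 0 -> exists f, in_dual f /\ (forall v, `|f v| <= `|v|) /\ f w = `|w|.
Proof.
move=> w0; have nw0 : `|w| != 0 by rewrite normr_eq0.
(* Smoothness supplies the norming functionals that Hahn-Banach gives in general. *)
have [[f sf] _] := hX (normfZV w0).
exists f; split; first exact: sf.1.
split; first exact: supp_fun_le sf.
by rewrite -{1}(scalerKV nw0 w) (lin_opZ sf.1.1) sf.2.2 normfZV //; exact: mulr1.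
Qed.

Lemma smooth_dual_separates y w : (forall f, in_dual f -> f y = f w) -> y = w.
Proof.
move=> hyw; apply/eqP; rewrite -subr_eq0; apply: contraT => yw0.
have [f [hf [_ fyw]]] := smooth_norming_fun yw0.
move: fyw; rewrite (lin_opB hf.1) hyw // subrr => /esym/normr0_eq0/eqP.
by rewrite (negbTE yw0).
Qed.

End Smooth.
End Duality.

Lemma in_dual_comp (R : realType) (X Y : normedModType R) (T : X -> Y) (g : Y -> R) :
  bounded_op T -> in_dual g -> in_dual (fun x => g (T x)).
Proof.
move=> hT hg; split=> [a x y|]; first by rewrite hT.1 hg.1.
exists (fnorm g * opnorm T) => x; apply: le_trans (fnormP hg _) _.
rewrite -mulrA; apply: ler_wpM2l; first exact: fnorm_ge0.
by apply: opnormP; [exact: hT.1 | exact: bounded_op_ball_bounded].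
Qed.

Definition weak_cvg_along (R : realType) (X : normedModType R) (F : set_system nat)
    (v : nat -> X) (u : X) :=
  forall f : X -> R, in_dual f -> (fun n => f (v n)) @ F --> f u.

Section Ultralimits.
Variable R : realType.
Context (G : set_system nat) {GU : UltraFilter G}.

Lemma ultra_cvg_compact (Z : topologicalType) (K : set Z) (s : nat -> Z) :
  compact K -> (forall n, K (s n)) -> exists2 p, K p & s @ G --> p.
Proof.
move=> cK Ks; have [p [Kp clp]] := cK (s @ G) _ (nearW _ Ks).
exists p => // V nV; have [//|GVC] := in_ultra_setVsetC (s @^-1` V) GU.
by have [q [nVq Vq]] := clp (~` V) V GVC nV.
Qed.

Lemma ultra_cvg_bounded (s : nat -> R) (C : R) :
  (forall n, `|s n| <= C) -> exists2 l, s @ G --> l & `|l| <= C.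
Proof.
move=> sC; have [|l Cl sl] := ultra_cvg_compact (@segment_compact R (- C) C) (s := s).
  by move=> n; rewrite /= in_itv /= -ler_norml.
by exists l => //; move: Cl; rewrite /= in_itv /= -ler_norml.
Qed.

Lemma ultralim_subseq (V : normedModType R) (s : nat -> V) (y : V) :
  s @ G --> y -> exists nk : nat -> nat, (fun k => s (nk k)) @ \oo --> y.
Proof.
move=> sy; have near_y k : exists n, `|y - s n| < harmonic k.
  by move/cvgr_dist_lt: sy => /(_ _ (harmonic_gt0 k)) /filter_ex.
have [nk hnk] := choice near_y.
exists nk; apply/cvgrPdist_lt => e e0.
move/cvgr_dist_lt: (@cvg_harmonic R) => /(_ _ e0); apply: filterS => k.
by rewrite sub0r normrN ger0_norm ?harmonic_ge0 //; exact: lt_trans (hnk k).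
Qed.

Lemma cvg_of_subseq_ultralim (V : normedModType R) (s : nat -> V) (l : V) :
  (forall psi : nat -> nat, (forall j, (j <= psi j)%N) -> (fun j => s (psi j)) @ G --> l) ->
  s @ \oo --> l.
Proof.
move=> hs; apply/cvgrPdist_lt => e e0; apply: contrapT => hfar.
have far_after j : exists k, (j <= k)%N /\ e <= `|l - s k|.
  apply: contrapT => hj; apply: hfar; exists j => // k /= jk.
  by rewrite ltNge; apply/negP => ek; apply: hj; exists k.
have [psi hpsi] := choice far_after.
move/cvgr_dist_lt: (hs psi (fun j => (hpsi j).1)) => /(_ _ e0) /filter_ex [j].
by rewrite ltNge (hpsi j).2.
Qed.

Section Weak.
Variable X : normedModType R.
Implicit Types (v : nat -> X) (u : X).

Lemma reflexive_weak_ultralim v :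
  reflexive_space X -> (forall n, `|v n| <= 1) -> exists u, weak_cvg_along G v u.
Proof.
move=> hX v1; pose phi (f : X -> R) := lim ((fun n => f (v n)) @ G).
have phiP f : in_dual f -> (fun n => f (v n)) @ G --> phi f /\ `|phi f| <= fnorm f.
  move=> hf; have fv n : `|f (v n)| <= fnorm f.
    by apply: le_trans (fnormP hf _) _; apply: ler_piMr; [exact: fnorm_ge0 | exact: v1].
  by have [l fl lf] := ultra_cvg_bounded fv; rewrite /phi (cvg_lim _ fl).
have [u hu] : exists u, forall f, in_dual f -> phi f = f u.
  apply: hX; split=> [a f g hf hg|]; last first.
    by exists 1 => f hf; rewrite mul1r; exact: (phiP f hf).2.
  have fg : (fun n => a * f (v n) + g (v n)) @ G --> a * phi f + phi g.
    by apply: cvgD; [apply: cvgMl_tmp; exact: (phiP f hf).1 | exact: (phiP g hg).1].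
  by rewrite /phi (cvg_lim _ fg).
by exists u => f hf; rewrite -hu //; exact: (phiP f hf).1.
Qed.

Lemma smooth_weak_ultralim_le1 v u :
  smooth_space X -> (forall n, `|v n| <= 1) -> weak_cvg_along G v u -> `|u| <= 1.
Proof.
move=> hX v1 vu; have [->|u0] := eqVneq u 0; first by rewrite normr0.
have [f [hf [fb fu]]] := smooth_norming_fun hX u0.
rewrite -fu; apply: (closed_cvg (fun t : R => t <= 1)) (vu f hf); first exact: closed_le.
by apply: nearW => n /=; apply: le_trans (ler_norm _) (le_trans (fb _) (v1 n)).
Qed.

Lemma bounded_op_weak_ultralim (Y : normedModType R) (T : X -> Y) v u (y : Y) :
  smooth_space Y -> bounded_op T -> weak_cvg_along G v u ->
  (fun n => T (v n)) @ G --> y -> T u = y.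
Proof.
move=> hY hT vu Tvy; apply: (smooth_dual_separates hY) => g hg.
have gTv : (fun n => g (T (v n))) @ G --> g y.
  by apply: continuous_cvg Tvy; exact: in_dual_continuous.
exact: norm_cvg_unique (vu _ (in_dual_comp hT hg)) gTv.
Qed.

End Weak.
End Ultralimits.

Lemma cvg_refine (S : Type) (Z : topologicalType) (F F' : set_system S) (s : S -> Z) (l : Z) :
  F `<=` F' -> s @ F --> l -> s @ F' --> l.
Proof. by move=> FF' sl A /sl; exact: FF'. Qed.

Lemma cvg_subseq_ge (Z : topologicalType) (s : nat -> Z) (l : Z) (psi : nat -> nat) :
  (forall j, (j <= psi j)%N) -> s @ \oo --> l -> (fun j => s (psi j)) @ \oo --> l.
Proof.
move=> psi_ge sl A /sl [N _ hN]; exists N => // j /= Nj.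
by apply: hN; exact: leq_trans (psi_ge j).
Qed.

Section CompactOperators.
Variables (R : realType) (X Y : normedModType R).
Implicit Types (T S : X -> Y).

Lemma rank_one_compact_op (f : X -> R) (y0 : Y) :
  in_dual f -> compact_op (fun v => f v *: y0).
Proof.
move=> hf; split; first exact: lin_op_rank_one hf.1.
pose L := (fun t : R => t *: y0) @` `[- fnorm f, fnorm f]%classic.
have cL : compact L.
  apply: continuous_compact; last exact: segment_compact.
  by apply: continuous_subspaceT => t; apply: cvgZr_tmp; exact: cvg_id.
have /closure_id clL : closed L by apply: compact_closed cL; exact: norm_hausdorff.
apply: (subclosed_compact _ cL); first exact: closed_closure.
rewrite clL; apply: closureS => _ [v v1 <-]; exists (f v) => //.
rewrite /= in_itv /= -ler_norml.
by apply: ler_opnorm => //; exact: in_dual_ball_bounded.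
Qed.

Lemma compact_op_attains_norm T :
  reflexive_space X -> smooth_space X -> smooth_space Y -> compact_op T ->
  exists2 x, `|x| <= 1 & `|T x| = opnorm T.
Proof.
move=> hXr hXs hYs hT; have [G [GU ooG]] := @ultraFilterLemma nat \oo _.
have almost_max n : exists v : X, `|v| <= 1 /\ opnorm T - harmonic n < `|T v|.
  have ne : [set `|T x| | x in [set x : X | `|x| <= 1]] !=set0.
    by exists `|T 0|, 0 => //=; rewrite normr0.
  have lt : opnorm T - harmonic n < opnorm T by rewrite ltrBlDr ltrDl harmonic_gt0.
  by have [_ [v v1 <-] ltv] := sup_gt ne lt; exists v.
have [v /all_and2 [v1 Tv]] := choice almost_max.
have inK n : closure [set T x | x in [set x : X | `|x| <= 1]] (T (v n)).
  by apply: subset_closure; exists (v n) => //; exact: v1.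
have [y _ Tvy] := ultra_cvg_compact (GU := GU) hT.2 inK.
have [u vu] := reflexive_weak_ultralim (GU := GU) hXr v1.
have u1 := smooth_weak_ultralim_le1 (GU := GU) hXs v1 vu.
exists u => //; apply/le_anti/andP; split.
  by apply: ler_opnorm u1; exact: compact_op_ball_bounded.
rewrite (bounded_op_weak_ultralim (GU := GU) hYs (compact_op_bounded hT) vu Tvy).
apply: (ler_cvg_to _ (cvg_norm Tvy)); last by apply: nearW => n; exact/ltW/Tv.
apply: cvg_refine ooG _; rewrite -[X in _ --> X]subr0.
by apply: cvgB; [exact: cvg_cst | exact: cvg_harmonic].
Qed.

Lemma norm_att_supp_funK T x (g : Y -> R) :
  compact_op T -> opnorm T = 1 -> norm_att T x -> supp_fun (T x) g ->
  supp_funK T (fun S => g (S x)).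
Proof.
move=> hT hT1 [x1 Tx] sg; rewrite hT1 in Tx.
have gSx S : compact_op S -> `|g (S x)| <= opnorm S.
  move=> hS; apply: le_trans (supp_fun_le sg (S x)) _.
  by rewrite -[leRHS]mulr1 -x1; apply: (opnormP hS.1 _ x); exact: compact_op_ball_bounded.
have gTx : g (T x) = 1 by rewrite sg.2.2 Tx.
split.
  split=> [a S1 S2 _ _ /=|]; first exact: sg.1.1.
  by exists 1 => S hS; rewrite mul1r; exact: gSx.
split; last by rewrite /= gTx hT1.
apply/le_anti/andP; split.
  apply: sup_image_le => [|S [hS S1]]; first by exists T; split; rewrite ?hT1.
  exact: le_trans (gSx S hS) S1.
rewrite -[X in X <= _]normr1 -gTx.
apply: (@le_sup_image _ _ _ (fun S => `|g (S x)|) 1) => [S [hS S1]|].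
  exact: le_trans (gSx S hS) S1.
by split; rewrite ?hT1.
Qed.

Lemma smooth_op_norm_att T :
  smooth_space X -> smooth_space Y -> compact_op T -> opnorm T = 1 -> smooth_op T ->
  forall x1 x2, norm_att T x1 -> norm_att T x2 -> x2 = x1 \/ x2 = - x1.
Proof.
move=> hXs hYs hT hT1 hTs x1 x2 M1 M2.
have Tx_unit x : norm_att T x -> `|T x| = 1 by case=> _; rewrite hT1.
have [[g1 sg1] _] := hYs _ (Tx_unit _ M1).
have [[g2 sg2] _] := hYs _ (Tx_unit _ M2).
have g12 := hTs.2 _ _ (norm_att_supp_funK hT hT1 M1 sg1) (norm_att_supp_funK hT hT1 M2 sg2).
set c := g2 (T x1).
have x1E : x1 = c *: x2.
  apply: (smooth_dual_separates hXs) => f hf.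
  have := g12 _ (rank_one_compact_op (T x1) hf) => /=.
  rewrite (lin_opZ sg1.1.1) (lin_opZ sg2.1.1) (lin_opZ hf.1) sg1.2.2 (Tx_unit _ M1).
  by rewrite /GRing.scale /= mulr1 mulrC.
have /eqP : `|c| = 1 by rewrite -M1.1 x1E normrZ M2.1 mulr1.
rewrite eqr_norml ler01 andbT => /orP [] /eqP c1; rewrite x1E c1 ?scale1r; first by left.
by right; rewrite scaleN1r opprK.
Qed.

Lemma smooth_op_norm_att_pair T :
  reflexive_space X -> smooth_space X -> smooth_space Y ->
  compact_op T -> opnorm T = 1 -> smooth_op T -> exists x, norm_att T = [set x; - x].
Proof.
move=> hXr hXs hYs hT hT1 hTs.
have [x x1 Tx] := compact_op_attains_norm hXr hXs hYs hT.
have Mx : norm_att T x.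
  split=> //; apply/le_anti; rewrite x1 /= -[X in X <= _]hT1 -Tx.
  exact: opnorm1_le.
have Mnx : norm_att T (- x) by rewrite /norm_att /= normrN (lin_opN hT.1) normrN.
exists x; rewrite predeqE => v; split=> [Mv|[]->] //.
by have [->|->] := smooth_op_norm_att hXs hYs hT hT1 hTs Mx Mv; [left | right].
Qed.

End CompactOperators.

Section Hyperspace.
Variables (R : realType) (X : normedModType R) (H : set X).

Lemma bj_orth_coef_le (x : X) (g : X -> R) :
  `|x| = 1 -> (forall h, H h -> bj_orth x h) -> (forall v, H (v - g v *: x)) ->
  forall v, `|g v| <= `|v|.
Proof.
move=> x1 xH gH v; have [->|gv0] := eqVneq (g v) 0; first by rewrite normr0.
have vE : v = g v *: (x + (g v)^-1 *: (v - g v *: x)).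
  by rewrite scalerDr scalerKV // addrC subrK.
rewrite [in leRHS]vE normrZ -[leLHS]mulr1 ler_wpM2l // -x1.
exact: xH (gH v) _.
Qed.

Hypothesis hH : hyperspace H.

Lemma hyperspaceZ a h : H h -> H (a *: h).
Proof. by case: hH => _ [H0 [Hlin _]] Hh; have := Hlin a h 0 Hh H0; rewrite addr0. Qed.

Lemma hyperspaceB u v : H u -> H v -> H (u - v).
Proof.
by case: hH => _ [_ [Hlin _]] Hu Hv; have := Hlin (-1) v u Hv Hu; rewrite scaleN1r addrC.
Qed.

Lemma hyperspace_functional (x : X) : ~ H x ->
  exists g : X -> R, [/\ lin_fun g, g x = 1,
    forall v, H (v - g v *: x) & forall h, H h -> g h = 0].
Proof.
move=> nHx; have [_ [H0 [Hlin [z [nHz Hspan]]]]] := hH.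
have coef_uniq v a b : H (v - a *: x) -> H (v - b *: x) -> a = b.
  move=> Ha Hb; apply: contra_notP nHx => /eqP ab.
  have := hyperspaceZ (b - a)^-1 (hyperspaceB Ha Hb).
  rewrite opprB [_ + (_ - v)]addrC addrA subrK -scalerBl scalerA mulVf ?scale1r //.
  by rewrite subr_eq0 eq_sym.
have coef_ex v : exists a, H (v - a *: x).
  have [hx [c [Hhx xE]]] := Hspan x; have [h [a [Hh vE]]] := Hspan v.
  have c0 : c != 0 by apply: contra_notN nHx => /eqP c0; rewrite xE c0 scale0r addr0.
  exists (a / c); rewrite vE xE scalerDr scalerA mulfVK //.
  rewrite opprD addrACA subrr addr0; apply: hyperspaceB Hh _; exact: hyperspaceZ.
have [g gH] := choice coef_ex.
exists g; split => // [a u v||h Hh].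
- apply: (coef_uniq (a *: u + v)) (gH _) _.
  rewrite scalerDl -scalerA opprD addrACA -scalerBr; exact: Hlin (gH u) (gH v).
- by apply: (coef_uniq x) (gH x) _; rewrite scale1r subrr.
- by apply: (coef_uniq h) (gH h) _; rewrite scale0r subr0.
Qed.

End Hyperspace.

Section NormGap.
Variables (R : realType) (X Y : normedModType R) (T : X -> Y) (x : X).
Hypotheses (hXr : reflexive_space X) (hXs : smooth_space X) (hXk : kadets_klee X).
Hypotheses (hYs : smooth_space Y) (hT : compact_op T) (hT1 : opnorm T = 1).
Hypothesis hMT : norm_att T = [set x; - x].

Lemma norm_att_unit : `|x| = 1 /\ `|T x| = 1.
Proof.
have [x1 Tx] : norm_att T x by rewrite hMT; left.
by rewrite x1 Tx hT1.
Qed.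

Lemma norm_att_inj u1 u2 : [set x; - x] u1 -> [set x; - x] u2 -> T u1 = T u2 -> u1 = u2.
Proof.
have Tx0 : T x != 0 by rewrite -normr_eq0 norm_att_unit.2 oner_neq0.
have TxN : T x != - T x.
  by apply: contraNneq Tx0 => /eqP; rewrite -addr_eq0 -mulr2n -scaler_nat scaler_eq0 pnatr_eq0.
by move=> [] -> [] -> //; rewrite (lin_opN hT.1) => /eqP; rewrite ?eqr_oppLR (negbTE TxN).
Qed.

Section Along.
Context (G : set_system nat) {GU : UltraFilter G}.

Lemma weak_ultralim_norm_att (z : nat -> X) (y : Y) (u : X) :
  `|y| = 1 -> (forall j, `|z j| <= 1) -> (fun j => T (z j)) @ G --> y ->
  weak_cvg_along G z u -> T u = y /\ [set x; - x] u.
Proof.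
move=> y1 z1 Tzy zu.
have Tuy := bounded_op_weak_ultralim (GU := GU) hYs (compact_op_bounded hT) zu Tzy.
split=> //; suff : norm_att T u by rewrite hMT.
split; last by rewrite Tuy hT1.
apply/le_anti/andP; split; first exact: (smooth_weak_ultralim_le1 (GU := GU) hXs z1 zu).
by rewrite -y1 -Tuy opnorm1_le.
Qed.

End Along.

Lemma maximizing_seq_subseq_cvg (v : nat -> X) :
  (forall n, `|v n| = 1) -> (fun n => `|T (v n)|) @ \oo --> (1 : R) ->
  exists2 u, [set x; - x] u & exists nk : nat -> nat, (fun k => v (nk k)) @ \oo --> u.
Proof.
move=> v1 Tv1; have [G [GU ooG]] := @ultraFilterLemma nat \oo _.
have vle1 n : `|v n| <= 1 by rewrite v1.
have inK n : closure [set T x | x in [set x : X | `|x| <= 1]] (T (v n)).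
  by apply: subset_closure; exists (v n) => //; exact: vle1.
have [y _ Tvy] := ultra_cvg_compact (GU := GU) hT.2 inK.
have y1 : `|y| = 1 by apply: norm_cvg_unique (cvg_norm Tvy) (cvg_refine ooG Tv1).
have [nk Twy] := ultralim_subseq Tvy.
pose w k := v (nk k); have w1 k : `|w k| <= 1 := vle1 (nk k).
have [u wu] := reflexive_weak_ultralim (GU := GU) hXr w1.
have [Tuy Mu] := weak_ultralim_norm_att (GU := GU) y1 w1 (cvg_refine ooG Twy) wu.
exists u => //; exists nk; apply: hXk; last first.
  rewrite (_ : (fun k => `|w k|) = fun=> `|u|); first exact: cvg_cst.
  by apply/funext => k; rewrite v1; case: Mu => ->; rewrite ?normrN norm_att_unit.1.
(* A weak ultralimit u' of any subsequence of w satisfies T u' = y and u' = +-x,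
   hence u' = u. *)
move=> f hf; apply: (cvg_of_subseq_ultralim (GU := GU)) => psi psi_ge.
have [u' wu'] := reflexive_weak_ultralim (GU := GU) hXr (fun j => w1 (psi j)).
have Twpy := cvg_refine ooG (cvg_subseq_ge psi_ge Twy).
have [Tu'y Mu'] := weak_ultralim_norm_att (GU := GU) y1 (fun j => w1 (psi j)) Twpy wu'.
by rewrite (norm_att_inj Mu Mu'); [exact: wu' | rewrite Tuy Tu'y].
Qed.

Lemma norm_gap_off_norm_att (r : R) : 0 < r -> exists2 eta, 0 < eta &
  forall v, `|v| = 1 -> r <= `|v - x| -> r <= `|v + x| -> `|T v| <= 1 - eta.
Proof.
move=> r0; apply: contrapT => nogap.
have bad n : exists v, [/\ `|v| = 1, r <= `|v - x|, r <= `|v + x| & 1 - harmonic n < `|T v|].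
  apply: contrapT => nv; apply: nogap; exists (harmonic n) => [|v v1 vx vNx].
    exact: harmonic_gt0.
  by rewrite leNgt; apply/negP => Tv; apply: nv; exists v.
have [v /all_and4 [v1 vx vNx Tv]] := choice bad.
have Tv1 : (fun n => `|T (v n)|) @ \oo --> (1 : R).
  apply/cvgrPdist_lt => e e0; move/cvgr_dist_lt: (@cvg_harmonic R) => /(_ _ e0).
  apply: filterS => n; rewrite sub0r normrN ger0_norm ?harmonic_ge0 // => hn.
  have := opnorm1_le hT hT1 (v n); rewrite v1 => Tvn.
  by rewrite ger0_norm ?subr_ge0 //; have := Tv n; lra.
have [u Mu [nk vu]] := maximizing_seq_subseq_cvg v1 Tv1.
move/cvgr_dist_lt: vu => /(_ _ r0) /filter_ex [k]; rewrite distrC ltNge.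
by case: Mu => ->; rewrite ?opprK ?vx ?vNx.
Qed.

End NormGap.

Section Perturbation.
Variables (R : realType) (X Y : normedModType R).

Lemma norm_le1_segment (p q : Y) (k K : R) :
  0 < K -> 0 <= k <= K -> `|p| <= 1 -> `|p + K *: q| <= 1 -> `|p + k *: q| <= 1.
Proof.
move=> K0 /andP [k0 kK] p1 pK1; set l := k / K.
have l0 : 0 <= l by rewrite divr_ge0 // ltW.
have l1 : l <= 1 by rewrite ler_pdivrMr // mul1r.
have -> : p + k *: q = l *: (p + K *: q) + (1 - l) *: p.
  rewrite scalerDr scalerA divfK ?gt_eqF // scalerBl scale1r.
  by rewrite addrAC [l *: p + _]addrC subrK.
have l1' : 0 <= 1 - l by rewrite subr_ge0.
apply: le_trans (ler_normD _ _) _.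
rewrite (normrZ l) (normrZ (1 - l)) (ger0_norm l0) (ger0_norm l1').
by have := ler_wpM2l l0 pK1; have := ler_wpM2l l1' p1; lra.
Qed.

Lemma not_extreme_of_perturbation (T Q : X -> Y) :
  lin_op T -> lin_op Q -> (exists v, Q v != 0) ->
  (forall v, `|T v + Q v| <= `|v|) -> (forall v, `|T v - Q v| <= `|v|) ->
  ~ extreme_contraction T.
Proof.
move=> hT hQ [v Qv0] TQD TQB [_ [_ ext]].
have contraction (S : X -> Y) :
    lin_op S -> (forall v, `|S v| <= `|v|) -> bounded_op S /\ opnorm S <= 1.
  move=> hS Sle; split; first by split=> //; exists 1 => u; rewrite mul1r.
  by apply: opnorm_le => u u1; exact: le_trans (Sle u) u1.
have [bD oD] := contraction _ (lin_op_add hT hQ) TQD.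
have [bB oB] := contraction _ (lin_op_sub hT hQ) TQB.
have half : (0 : R) < (2 : R)^-1 < 1 by apply/andP; split; lra.
have Tmid : T = (fun u => 2^-1 *: (T u + Q u) + (1 - 2^-1) *: (T u - Q u)).
  apply/funext => u; rewrite (_ : 1 - 2^-1 = 2^-1 :> R); last by field.
  rewrite -scalerDr addrACA subrr addr0 -mulr2n -[T u *+ 2]scaler_nat scalerA.
  by rewrite mulVf ?scale1r // pnatr_eq0.
have /(congr1 (fun S => S v))/addrI/eqP := ext _ _ _ bD oD bB oB half Tmid.
rewrite -subr_eq0 opprK -mulr2n -[Q v *+ 2]scaler_nat scaler_eq0 pnatr_eq0 /=.
exact/negP.
Qed.

End Perturbation.

Section CPP.
Variables (R : realType) (X Y : normedModType R).

Lemma CPP_homogeneous (x z : X) (y w : Y) (r mu a : R) :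
  CPP x y r mu -> bj_orth x z -> bj_orth y w -> z != 0 -> w != 0 ->
  `|a *: x + z - x| < r -> `|a *: x + z| = 1 -> `|a *: y + (mu * `|z| / `|w|) *: w| <= 1.
Proof.
case=> _ [_ [_ [_ cpp]]] xz yw z0 w0.
have nz0 : `|z| != 0 by rewrite normr_eq0.
have := cpp _ _ a `|z| (bj_orthZ _ xz) (normfZV z0) (bj_orthZ _ yw) (normfZV w0).
by rewrite scalerKV // scalerA [_ * mu]mulrC => /[apply] /[apply].
Qed.

Lemma smooth_bj_orth_image (T : X -> Y) (x : X) (g : X -> R) :
  smooth_space X -> smooth_space Y -> lin_op T -> (forall v, `|T v| <= `|v|) ->
  `|x| = 1 -> `|T x| = 1 -> supp_fun x g -> forall h, g h = 0 -> bj_orth (T x) (T h).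
Proof.
move=> hXs hYs hT Tle x1 Tx1 sg h gh0; have [[gy sgy] _] := hYs _ Tx1.
have sgyT : supp_fun x (fun v => gy (T v)).
  apply: supp_funP x1 _ _ _ => [a u w|v|]; first by rewrite hT sgy.1.1.
    exact: le_trans (supp_fun_le sgy _) (Tle v).
  by rewrite sgy.2.2 Tx1.
have gyTE := (hXs x x1).2 _ _ sg sgyT.
apply: (bj_orth_of_norming sgy.1.1 (supp_fun_le sgy)); first by rewrite sgy.2.2.
by have := congr1 (fun f => f h) gyTE; rewrite /= gh0.
Qed.

Lemma opnorm_on_le (T : X -> Y) (H : set X) :
  lin_op T -> (forall v, `|T v| <= `|v|) -> (forall a h, H h -> H (a *: h)) ->
  forall h, H h -> `|T h| <= opnorm_on T H * `|h|.
Proof.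
move=> hT Tle HZ h Hh; have [->|h0] := eqVneq h 0; first by rewrite lin_op0 // !normr0 mulr0.
have nh0 : `|h| != 0 by rewrite normr_eq0.
rewrite -{1}(scalerKV nh0 h) lin_opZ // normrZ normr_id mulrC; apply: ler_wpM2r => //.
apply: (@le_sup_image _ _ _ (fun h => `|T h|) 1) => [u [_ u1]|]; first by rewrite -u1 Tle.
by split; [exact: HZ | exact: normfZV].
Qed.

Lemma opnorm_on_gt0 (T : X -> Y) (H : set X) : 0 < opnorm_on T H -> exists2 h, H h & T h != 0.
Proof.
move=> m0; have ne : [set `|T h| | h in [set h | H h /\ `|h| = 1]] !=set0.
  by apply/set0P/eqP => A0; move: m0; rewrite /opnorm_on A0 sup0 ltxx.
by have [_ [h [Hh _] <-] Th] := sup_gt ne m0; exists h; rewrite // -normr_gt0.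
Qed.

End CPP.

Section CPPPerturbation.
Variables (R : realType) (X Y : normedModType R) (T : X -> Y) (x : X) (g : X -> R).
Variables (H : set X) (r mu m eta d : R).
Hypotheses (hT : lin_op T) (Tle : forall v, `|T v| <= `|v|).
Hypotheses (x1 : `|x| = 1) (Tx1 : `|T x| = 1).
Hypotheses (hg : lin_fun g) (gle : forall v, `|g v| <= `|v|) (gH : forall v, H (v - g v *: x)).
Hypotheses (xH : forall h, H h -> bj_orth x h) (TxH : forall h, H h -> bj_orth (T x) (T h)).
Hypotheses (hcpp : CPP x (T x) r mu) (Tm : forall h, H h -> `|T h| <= m * `|h|).
Hypothesis gap : forall v, `|v| = 1 -> r <= `|v - x| -> r <= `|v + x| -> `|T v| <= 1 - eta.
Hypotheses (d0 : 0 <= d) (d1 : d <= 1) (d_eta : 2 * d <= eta) (d_mu : (1 + d) * m <= mu).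

Definition comp_proj (v : X) : Y := T (v - g v *: x).

Lemma lin_op_comp_proj : lin_op comp_proj.
Proof.
move=> a u w; rewrite /comp_proj hg -hT; congr T.
by rewrite scalerBr scalerA scalerDl opprD addrACA.
Qed.

Lemma comp_proj_minus_le v : `|T v - d *: comp_proj v| <= `|v|.
Proof.
have -> : T v - d *: comp_proj v = (1 - d) *: T v + (d * g v) *: T x.
  rewrite /comp_proj (lin_opB hT) (lin_opZ hT) scalerBr opprB scalerBl scale1r scalerA.
  by rewrite addrCA addrC.
apply: le_trans (ler_normD _ _) _.
have d1' : 0 <= 1 - d by rewrite subr_ge0.
rewrite !normrZ Tx1 mulr1 (ger0_norm d0) (ger0_norm d1').
by have := ler_wpM2l d0 (gle v); have := ler_wpM2l d1' (Tle v); lra.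
Qed.

Lemma comp_proj_plus_near v : `|v| = 1 -> `|v - x| < r -> `|T v + d *: comp_proj v| <= 1.
Proof.
move=> v1 vx; rewrite /comp_proj; set h := v - g v *: x.
have Hh : H h := gH v.
have vE : g v *: x + h = v by rewrite addrC subrK.
have gv1 : `|g v *: T x| <= 1 by rewrite normrZ Tx1 mulr1 -v1 gle.
have [Th0|Th0] := eqVneq (T h) 0; first by rewrite Th0 scaler0 addr0 -v1 Tle.
have h0 : h != 0 by apply: contra_neq Th0 => ->; exact: lin_op0.
have -> : T v + d *: T h = g v *: T x + (1 + d) *: T h.
  by rewrite -{1}vE (lin_opD hT) (lin_opZ hT) scalerDl scale1r addrA.
have mu0 : 0 < mu := hcpp.2.2.2.1.
apply: (@norm_le1_segment _ _ _ _ _ (mu * `|h| / `|T h|)) gv1 _.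
- by rewrite !mulr_gt0 ?invr_gt0 ?normr_gt0.
- rewrite addr_ge0 //= ler_pdivlMr ?normr_gt0 //.
  by apply: le_trans (ler_wpM2l _ (Tm Hh)) _; rewrite ?mulrA ?ler_wpM2r ?addr_ge0.
- by rewrite -vE in v1 vx; exact: CPP_homogeneous hcpp (xH Hh) (TxH Hh) h0 Th0 vx v1.
Qed.

Lemma comp_proj_plus_le v : `|T v + d *: comp_proj v| <= `|v|.
Proof.
have hS : lin_op (fun v => T v + d *: comp_proj v).
  exact: lin_op_add hT (lin_op_scale d lin_op_comp_proj).
rewrite -[leRHS]mul1r; apply: (lin_op_norm_le hS) => {}v v1.
have [vx|xv] := ltP `|v - x| r; first exact: comp_proj_plus_near.
have [vNx|Nxv] := ltP `|v + x| r.
  have := comp_proj_plus_near (v := - v); rewrite normrN -opprD normrN => /(_ v1 vNx).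
  by have /= -> := lin_opN hS v; rewrite normrN.
apply: le_trans (ler_normD _ _) _; rewrite normrZ (ger0_norm d0).
have Pv2 : `|comp_proj v| <= 2.
  apply: le_trans (Tle _) _; apply: le_trans (ler_normB _ _) _.
  by rewrite normrZ x1 mulr1 v1; have := gle v; rewrite v1; lra.
apply: le_trans (lerD (gap v1 xv Nxv) (ler_wpM2l d0 Pv2)) _.
by rewrite addrAC lerBlDr lerD2l mulrC.
Qed.

End CPPPerturbation.

Lemma CPP_not_extreme (R : realType) (X Y : normedModType R) (T : X -> Y) (x : X)
    (H : set X) (r mu : R) :
  reflexive_space X -> smooth_space X -> kadets_klee X -> smooth_space Y ->
  compact_op T -> opnorm T = 1 -> norm_att T = [set x; - x] ->
  hyperspace H -> (forall h, H h -> bj_orth x h) -> CPP x (T x) r mu ->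
  0 < opnorm_on T H < mu -> ~ extreme_contraction T.
Proof.
move=> hXr hXs hXk hYs hT hT1 hMT hH xH hcpp /andP [m0 m_mu].
have [x1 Tx1] := norm_att_unit hT1 hMT.
have Tle := opnorm1_le hT hT1.
have nHx : ~ H x by move=> /xH /(_ (-1)); rewrite scaleN1r subrr normr0 x1 ler10.
have [g [hg gx gH gH0]] := hyperspace_functional hH nHx.
have gle := bj_orth_coef_le x1 xH gH.
have TxH h : H h -> bj_orth (T x) (T h).
  move=> Hh; apply: (smooth_bj_orth_image hXs hYs hT.1 Tle x1 Tx1 _ (gH0 h Hh)).
  exact: supp_funP x1 hg gle gx.
have [eta eta0 gap] := norm_gap_off_norm_att hXr hXs hXk hYs hT hT1 hMT hcpp.2.2.1.
have Tm := opnorm_on_le hT.1 Tle (hyperspaceZ hH).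
set m := opnorm_on T H in m0 m_mu Tm.
pose d := Num.min (eta / 2) (Num.min ((mu - m) / m) 1).
have d0 : 0 < d by rewrite /d !lt_min !divr_gt0 ?subr_gt0 ?ltr01.
have d1 : d <= 1 by rewrite /d !ge_min lexx !orbT.
have d_eta : 2 * d <= eta by rewrite -ler_pdivlMl // mulrC /d ge_min lexx.
have d_mu : (1 + d) * m <= mu.
  by rewrite mulrDl mul1r -lerBrDl -ler_pdivlMr // /d !ge_min lexx orbT.
have [h0 Hh0 Th0] := opnorm_on_gt0 m0.
apply: (not_extreme_of_perturbation hT.1 (lin_op_scale d (lin_op_comp_proj x hT.1 hg))).
- exists h0; rewrite /comp_proj gH0 // scale0r subr0 scaler_eq0 negb_or Th0 andbT.
  exact: lt0r_neq0.
- exact: comp_proj_plus_le hT.1 Tle x1 Tx1 hg gle gH xH TxH hcpp Tm gap (ltW d0) d_eta d_mu.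
- exact: comp_proj_minus_le hT.1 Tle Tx1 gle (ltW d0) d1.
Qed.

Theorem mainTheorem17 (R : realType) (X Y : completeNormedModType R)
  (hX2 : dim_gt1 X) (hY2 : dim_gt1 Y)
  (hXs : smooth_space X) (hXr : reflexive_space X) (hXk : kadets_klee X)
  (hYs : smooth_space Y)
  (T : X -> Y) (hTc : compact_op T) (hT1 : opnorm T = 1) (hTs : smooth_op T) :
  exists x : X, `|x| = 1 /\ norm_att T = [set x; - x] /\
    forall (H : set X) (r mu : R),
      hyperspace H -> (forall h, H h -> bj_orth x h) ->
      CPP x (T x) r mu -> 0 < opnorm_on T H < mu ->
      ~ extreme_contraction T.
Proof.
have [x hMT] := smooth_op_norm_att_pair hXr hXs hYs hTc hT1 hTs.
exists x; split; first exact: (norm_att_unit hT1 hMT).1.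
split=> // H r mu hH xH hcpp hm.
exact: CPP_not_extreme hXr hXs hXk hYs hTc hT1 hMT hH xH hcpp hm.
Qed.
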